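(* Let $\mathcal{G}\rightrightarrows M$ be a diffeological groupoid. Then the quotient groupoid $\mathcal{G}/(\mathcal{G},\mathcal{G})$, equipped with the quotient diffeology, is a diffeological groupoid and, together with the quotient map, is the abelianization of $\mathcal{G}$ in the category of diffeological groupoids.
   Context: A diffeological space is a set $X$ with a family of maps (plots) from open subsets of Euclidean spaces to $X$, containing constants, local in nature, and closed under precomposition with smooth maps; smooth maps send plots to plots. A diffeological groupoid is a groupoid object in diffeological spaces. For a surjection $q:X\to\tilde X$, the quotient diffeology consists of maps $P:U\to\tilde X$ that locally are constant or of the form $q\circ Q$ with $Q$ a plot of $X$; the subset diffeology on $Y\subset X$ consists of plots of $X$ with image in $Y$. The D-topology is the finest topology making all plots continuous. $(\mathcal{G},\mathcal{G})=\bigcup_x(\mathcal{G}_x,\mathcal{G}_x)$ is the union of the commutator subgroups of the isotropy groups $\mathcal{G}_x$. A groupoid is abelian if all isotropy groups are abelian. An abelianization of $\mathcal{G}\rightrightarrows M$ is an abelian diffeological groupoid $\mathcal{G}^{ab}\rightrightarrows M$ with a surjective smooth groupoid morphism $p:\mathcal{G}\to\mathcal{G}^{ab}$ covering $\mathrm{id}_M$ such that for every open (in the D-topology) $U\subset M$, every abelian diffeological groupoid $\mathcal{H}$ and every smooth morphism $\psi:\mathcal{G}|_U\to\mathcal{H}$ (restrictions carrying the subset diffeology) there is a unique smooth morphism $\tilde\psi:\mathcal{G}^{ab}|_U\to\mathcal{H}$ with $\tilde\psi\circ p|_U=\psi$. *)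

From HB Require Import structures.
From mathcomp Require Import all_boot all_order all_algebra.
From mathcomp Require Import all_classical all_reals all_analysis.
From mathcomp Require Import Rstruct Rstruct_topology.
Unset Printing Implicit Defensive.
Import Order.TTheory GRing.Theory Num.Theory.
Import numFieldNormedType.Exports.
Local Open Scope classical_set_scope.
Local Open Scope ring_scope.

Notation RR := Rdefinitions.R.

Fixpoint Ck {n m : nat} (k : nat) (V : set 'rV[RR]_n)
    (f : 'rV[RR]_n -> 'rV[RR]_m) : Prop :=
  match k with
  | 0 => forall x, V x -> {for x, continuous f}
  | k'.+1 => (forall x, V x -> differentiable f x) /\
             (forall v : 'rV[RR]_n, Ck k' V (fun x => 'D_v f x))
  end.

Definition smooth_on {n m : nat} (V : set 'rV[RR]_n)
    (f : 'rV[RR]_n -> 'rV[RR]_m) : Prop := forall k, Ck k V f.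

Definition plots (X : Type) :=
  forall (n : nat) (U : set 'rV[RR]_n), ({u | U u} -> X) -> Prop.

Definition restrict_par (X : Type) (n : nat) (U V : set 'rV[RR]_n)
    (hV : V `<=` U) (P : {u | U u} -> X) : {v | V v} -> X :=
  fun v => P (exist _ (proj1_sig v) (hV _ (proj2_sig v))).
Arguments restrict_par {X n U V} hV P.

Definition is_diffeology {X : Type} (D : plots X) : Prop :=
  (forall n U P, D n U P -> open U) /\
  (forall n (U : set 'rV[RR]_n) (x : X), open U -> D n U (fun _ => x)) /\
  (forall n (U : set 'rV[RR]_n) (P : {u | U u} -> X), open U ->
     (forall u, U u -> exists V (hV : V `<=` U),
        [/\ open V, V u & D n V (restrict_par hV P)]) ->
     D n U P) /\
  (forall n m (U : set 'rV[RR]_n) (V : set 'rV[RR]_m) (P : {u | U u} -> X)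
          (F : 'rV[RR]_m -> 'rV[RR]_n) (hF : forall v, V v -> U (F v)),
     D n U P -> open V -> smooth_on V F ->
     D m V (fun v => P (exist _ (F (proj1_sig v)) (hF _ (proj2_sig v))))).

Definition dsmooth (X Y : Type) (DX : plots X) (DY : plots Y) (f : X -> Y) :=
  forall n U P, DX n U P -> DY n U (f \o P).
Arguments dsmooth {X Y} DX DY f.

Definition prod_plots (X Y : Type) (DX : plots X) (DY : plots Y)
  : plots (X * Y) :=
  fun n U P => DX n U (fst \o P) /\ DY n U (snd \o P).
Arguments prod_plots {X Y} DX DY _ _ _.

Definition sub_plots (X : Type) (A : set X) (DX : plots X) : plots {x | A x} :=
  fun n U P => DX n U (@proj1_sig _ _ \o P).
Arguments sub_plots {X} A DX _ _ _.

Definition quot_plots (X Y : Type) (q : X -> Y) (DX : plots X) : plots Y :=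
  fun n U P => open U /\
    forall u, U u -> exists V (hV : V `<=` U), [/\ open V, V u &
      (exists y, forall v, restrict_par hV P v = y) \/
      (exists Q, DX n V Q /\ forall v, restrict_par hV P v = q (Q v))].
Arguments quot_plots {X Y} q DX _ _ _.

Definition D_open (X : Type) (DX : plots X) (A : set X) : Prop :=
  forall n U P, DX n U P ->
    open [set x : 'rV[RR]_n | exists h : U x, A (P (exist _ x h))].
Arguments D_open {X} DX A.

Section Groupoids.
Variables (G M : Type) (DG : plots G) (DM : plots M).
Variables (src tgt : G -> M) (unit : M -> G) (inv : G -> G) (mul : G -> G -> G).
(* convention: mul g h is defined when src g = tgt h ("g after h") *)

Definition composable : set (G * G) := [set p | src p.1 = tgt p.2].

Definition groupoid_axioms : Prop :=
  (forall x, src (unit x) = x /\ tgt (unit x) = x) /\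
  (forall g, src (inv g) = tgt g /\ tgt (inv g) = src g) /\
  (forall g h, src g = tgt h -> src (mul g h) = src h /\ tgt (mul g h) = tgt g) /\
  (forall g h k, src g = tgt h -> src h = tgt k ->
      mul (mul g h) k = mul g (mul h k)) /\
  (forall g, mul (unit (tgt g)) g = g /\ mul g (unit (src g)) = g) /\
  (forall g, mul g (inv g) = unit (tgt g) /\ mul (inv g) g = unit (src g)).

Definition is_dgroupoid : Prop :=
  [/\ is_diffeology DG, is_diffeology DM & groupoid_axioms] /\
  [/\ dsmooth DG DM src, dsmooth DG DM tgt,
      dsmooth DM DG unit, dsmooth DG DG inv &
      dsmooth (sub_plots composable (prod_plots DG DG)) DG
              (fun p => mul (proj1_sig p).1 (proj1_sig p).2)].

Definition isotropic (x : M) (g : G) : Prop := src g = x /\ tgt g = x.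

Definition abelian_gpd : Prop :=
  forall x g h, isotropic x g -> isotropic x h -> mul g h = mul h g.

Definition comp_graph (g h k : G) : Prop := src g = tgt h /\ k = mul g h.

Inductive commutator_sub (x : M) : G -> Prop :=
| cs_unit : commutator_sub x (unit x)
| cs_comm a b : isotropic x a -> isotropic x b ->
    commutator_sub x (mul (mul a b) (mul (inv a) (inv b)))
| cs_mul g h : commutator_sub x g -> commutator_sub x h ->
    commutator_sub x (mul g h)
| cs_inv g : commutator_sub x g -> commutator_sub x (inv g).

Definition comm_subgpd : set G := [set g | exists x, commutator_sub x g].

Definition ab_rel (g h : G) : Prop :=
  exists n, comm_subgpd n /\ src n = tgt g /\ h = mul n g.

Definition ab_quot : Type := {A : set G | exists g, A = ab_rel g}.

Definition ab_proj (g : G) : ab_quot := exist _ (ab_rel g) (ex_intro _ g erefl).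

Definition res_arr (U : set M) : Type := {g : G | U (src g) /\ U (tgt g)}.
Definition res_src (U : set M) (g : res_arr U) : {x | U x} :=
  exist _ (src (proj1_sig g)) (proj1 (proj2_sig g)).
Definition res_tgt (U : set M) (g : res_arr U) : {x | U x} :=
  exist _ (tgt (proj1_sig g)) (proj2 (proj2_sig g)).
Definition res_comp (U : set M) (g h k : res_arr U) : Prop :=
  comp_graph (proj1_sig g) (proj1_sig h) (proj1_sig k).
Definition res_arr_plots (U : set M) : plots (res_arr U) :=
  sub_plots (fun g => U (src g) /\ U (tgt g)) DG.
Definition res_obj_plots (U : set M) : plots {x | U x} := sub_plots U DM.

End Groupoids.
Arguments composable {G M} src tgt.
Arguments groupoid_axioms {G M} src tgt unit inv mul.
Arguments is_dgroupoid {G M} DG DM src tgt unit inv mul.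
Arguments isotropic {G M} src tgt x g.
Arguments abelian_gpd {G M} src tgt mul.
Arguments comp_graph {G M} src tgt mul g h k.
Arguments commutator_sub {G M} src tgt unit inv mul x _.
Arguments comm_subgpd {G M} src tgt unit inv mul _.
Arguments ab_rel {G M} src tgt unit inv mul g h.
Arguments ab_quot {G M} src tgt unit inv mul.
Arguments ab_proj {G M} src tgt unit inv mul g.
Arguments res_arr {G M} src tgt U.
Arguments res_src {G M} src tgt U g.
Arguments res_tgt {G M} src tgt U g.
Arguments res_comp {G M} src tgt mul U g h k.
Arguments res_arr_plots {G M} DG src tgt U _ _ _.
Arguments res_obj_plots {M} DM U _ _ _.

Definition is_gpd_morphism {G M H N : Type}
    (DG : plots G) (DM : plots M) (DH : plots H) (DN : plots N)
    (srcG tgtG : G -> M) (compG : G -> G -> G -> Prop)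
    (srcH tgtH : H -> N) (compH : H -> H -> H -> Prop)
    (f : G -> H) (f0 : M -> N) : Prop :=
  [/\ dsmooth DG DH f, dsmooth DM DN f0,
      forall g, srcH (f g) = f0 (srcG g),
      forall g, tgtH (f g) = f0 (tgtG g) &
      forall g h k, compG g h k -> compH (f g) (f h) (f k)].

Definition is_abelianization {G M A : Type} (DG : plots G) (DM : plots M)
    (src tgt : G -> M) (unit : M -> G) (inv : G -> G) (mul : G -> G -> G)
    (DA : plots A) (srcA tgtA : A -> M) (unitA : M -> A) (invA : A -> A)
    (mulA : A -> A -> A) (p : G -> A) : Prop :=
  [/\ is_dgroupoid DA DM srcA tgtA unitA invA mulA,
      abelian_gpd srcA tgtA mulA,
      (forall a, exists g, p g = a),
      is_gpd_morphism DG DM DA DM src tgt (comp_graph src tgt mul)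
        srcA tgtA (comp_graph srcA tgtA mulA) p id &
      forall (U : set M), D_open DM U ->
      forall (H N : Type) (DH : plots H) (DN : plots N)
             (srcH tgtH : H -> N) (unitH : N -> H) (invH : H -> H)
             (mulH : H -> H -> H),
        is_dgroupoid DH DN srcH tgtH unitH invH mulH ->
        abelian_gpd srcH tgtH mulH ->
      forall (psi : res_arr src tgt U -> H) (psi0 : {x | U x} -> N),
        is_gpd_morphism (res_arr_plots DG src tgt U) (res_obj_plots DM U) DH DN
          (res_src src tgt U) (res_tgt src tgt U)
          (res_comp src tgt mul U)
          srcH tgtH (comp_graph srcH tgtH mulH) psi psi0 ->
        exists chi : res_arr srcA tgtA U -> H,
          [/\ is_gpd_morphism (res_arr_plots DA srcA tgtA U) (res_obj_plots DM U)
                DH DN (res_src srcA tgtA U) (res_tgt srcA tgtA U)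
                (res_comp srcA tgtA mulA U)
                srcH tgtH (comp_graph srcH tgtH mulH) chi psi0,
              (forall g a, proj1_sig a = p (proj1_sig g) -> chi a = psi g) &
              forall (chi' : res_arr srcA tgtA U -> H) (chi0' : {x | U x} -> N),
                is_gpd_morphism (res_arr_plots DA srcA tgtA U) (res_obj_plots DM U)
                  DH DN (res_src srcA tgtA U) (res_tgt srcA tgtA U)
                  (res_comp srcA tgtA mulA U)
                  srcH tgtH (comp_graph srcH tgtH mulH) chi' chi0' ->
                (forall g a, proj1_sig a = p (proj1_sig g) -> chi' a = psi g) ->
                chi' = chi]].

(* Conjugation by an arbitrary arrow g maps the commutator subgroup of G_(src g)
   into that of G_(tgt g), so "h = n g for some n in (G,G)" is a congruence for the
   partial composition and G/(G,G) inherits a groupoid structure with abelian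
   isotropy. Every plot of the quotient diffeology lifts locally to a plot of G
   (locally constant plots lift to constant ones because p is onto), so the
   structure maps of G/(G,G) are smooth because those of G are. A morphism into an
   abelian groupoid preserves units and inverses, hence kills every commutator and
   is constant on classes: it descends along a choice of representatives, smoothly
   by the same lifting, and uniquely because p is onto. *)

From mathcomp Require Import all_boot all_order all_algebra.
From mathcomp Require Import all_classical all_reals all_analysis.
From mathcomp Require Import Rstruct Rstruct_topology.
Import numFieldNormedType.Exports.
Local Open Scope classical_set_scope.
Local Open Scope ring_scope.

Lemma Ck_cst n m k (V : set 'rV[RR]_n) (c : 'rV[RR]_m) : Ck k V (fun=> c).
Proof.
elim: k c => [|k IHk] c /=; first by move=> x _; exact: cst_continuous.
split=> [x _|v]; first exact: differentiable_cst.
have -> : (fun x => 'D_v (fun=> c) x) = fun=> 0.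
  by apply: funext => x; exact: derive_cst.
exact: IHk.
Qed.

Lemma Ck_id n k (V : set 'rV[RR]_n) : Ck k V (fun x => x).
Proof.
case: k => [|k] /=; first by move=> x _ A; exact.
split=> [x _|v]; first exact: (@ex_diff _ _ _ _ _ _ _ (is_diff_id x)).
have -> : (fun x => 'D_v (fun x : 'rV[RR]_n => x) x) = fun=> v.
  by apply: funext => x; exact: derive_id.
exact: Ck_cst.
Qed.

Lemma Ck_subset {n m k} {V W : set 'rV[RR]_n} {f : 'rV[RR]_n -> 'rV[RR]_m} :
  W `<=` V -> Ck k V f -> Ck k W f.
Proof.
move=> WV; elim: k f => [|k IHk] f /=; first by move=> fC x /WV; exact: fC.
by move=> [fD fC]; split=> [x /WV|v]; [exact: fD | exact: IHk].
Qed.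

Lemma open_setI_preimage n m (V : set 'rV[RR]_n) (W : set 'rV[RR]_m)
    (F : 'rV[RR]_n -> 'rV[RR]_m) :
  open V -> open W -> (forall x, V x -> {for x, continuous F}) ->
  open (V `&` F @^-1` W).
Proof.
move=> oV oW FC; rewrite openE => y [Vy WFy].
have VN : nbhs y V by apply: open_nbhs_nbhs.
have WN : nbhs (F y) W by apply: open_nbhs_nbhs.
exact: filterI VN (FC y Vy _ WN).
Qed.

Lemma restrict_par_comp {X : Type} {n} {U V W : set 'rV[RR]_n} (VU : V `<=` U)
    (WV : W `<=` V) (WU : W `<=` U) (P : {u | U u} -> X) w :
  restrict_par WV (restrict_par VU P) w = restrict_par WU P w.
Proof. by congr P; exact: eq_exist. Qed.

Lemma diffeology_restrict (X : Type) (D : plots X) n (U V : set 'rV[RR]_n)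
    (VU : V `<=` U) (P : {u | U u} -> X) :
  is_diffeology D -> D n U P -> open V -> D n V (restrict_par VU P).
Proof.
move=> [_ [_ [_ D_smooth]]] DP oV.
exact: (D_smooth n n U V P (fun x => x) VU DP oV (fun k => Ck_id _ k V)).
Qed.

Lemma dsmooth_comp {X Y Z : Type} {DX : plots X} {DY : plots Y} {DZ : plots Z}
    {f : X -> Y} {g : Y -> Z} :
  dsmooth DX DY f -> dsmooth DY DZ g -> dsmooth DX DZ (g \o f).
Proof. by move=> fS gS n U P /fS /gS. Qed.

Section QuotientDiffeology.
Context {X Y : Type} {q : X -> Y} {D : plots X}.
Hypotheses (diffD : is_diffeology D) (q_surj : forall y, exists x, q x = y).

Lemma quot_plot_lift {n U P} (P_quot : quot_plots q D n U P) {u} (Uu : U u) :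
  exists V (VU : V `<=` U) Q,
    [/\ open V, V u, D n V Q & forall v, restrict_par VU P v = q (Q v)].
Proof.
have [_ P_loc] := P_quot.
have [V [VU [oV Vu [[y Py]|[Q [DQ PQ]]]]]] := P_loc u Uu.
- have [x qx] := q_surj y; exists V, VU, (fun=> x); split => //.
    by case: diffD => [_ [D_cst _]]; exact: D_cst.
  by move=> v; rewrite Py qx.
- by exists V, VU, Q.
Qed.

Lemma quot_plot_from_lifts n U P : open U -> (forall u, U u ->
    exists V (VU : V `<=` U) Q,
      [/\ open V, V u, D n V Q & forall v, restrict_par VU P v = q (Q v)]) ->
  quot_plots q D n U P.
Proof.
move=> oU P_lift; split => // u Uu; have [V [VU [Q [oV Vu DQ PQ]]]] := P_lift u Uu.
by exists V, VU; split => //; right; exists Q.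
Qed.

Lemma quot_plot_lift2 {n U P1 P2} (P1_quot : quot_plots q D n U P1)
    (P2_quot : quot_plots q D n U P2) {u} (Uu : U u) :
  exists V (VU : V `<=` U) Q1 Q2, [/\ open V, V u, D n V Q1, D n V Q2 &
    forall v, restrict_par VU P1 v = q (Q1 v) /\ restrict_par VU P2 v = q (Q2 v)].
Proof.
have [V1 [V1U [Q1 [oV1 V1u DQ1 PQ1]]]] := quot_plot_lift P1_quot Uu.
have [V2 [V2U [Q2 [oV2 V2u DQ2 PQ2]]]] := quot_plot_lift P2_quot Uu.
have WV1 : V1 `&` V2 `<=` V1 by move=> w [].
have WV2 : V1 `&` V2 `<=` V2 by move=> w [].
have WU : V1 `&` V2 `<=` U by move=> w [/V1U].
have oW : open (V1 `&` V2) by exact: openI.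
exists (V1 `&` V2), WU, (restrict_par WV1 Q1), (restrict_par WV2 Q2).
split => //; try exact: diffeology_restrict.
move=> w; rewrite /restrict_par -PQ1 -PQ2 /restrict_par /=.
by split; [congr P1 | congr P2]; exact: eq_exist.
Qed.

Lemma quot_diffeology : is_diffeology (quot_plots q D).
Proof.
have [_ [D_cst [_ D_smooth]]] := diffD.
split; first by move=> n U P [].
split.
  move=> n U y oU; split => // u Uu.
  by exists U, (fun _ h => h); split => //; left; exists y.
split.
  move=> n U P oU P_loc; apply: quot_plot_from_lifts => // u Uu.
  have [V [VU [oV Vu P_quot]]] := P_loc u Uu.
  have [W [WV [Q [oW Wu DQ PQ]]]] := quot_plot_lift P_quot Vu.
  have WU : W `<=` U by move=> w /WV /VU.
  by exists W, WU, Q; split => // w; rewrite -(restrict_par_comp VU WV).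
move=> n m U V P F FU P_quot oV F_smooth.
apply: quot_plot_from_lifts => // v Vv.
have [W [WU [Q [oW WFv DQ PQ]]]] := quot_plot_lift P_quot (FU v Vv).
have oVW : open (V `&` F @^-1` W).
  by apply: open_setI_preimage => // x Vx; exact: (F_smooth 0%N x Vx).
have VWV : V `&` F @^-1` W `<=` V by move=> y [].
have VWW : forall y, (V `&` F @^-1` W) y -> W (F y) by move=> y [].
exists (V `&` F @^-1` W), VWV, (fun y => Q (exist _ (F (proj1_sig y)) (VWW _ (proj2_sig y)))).
split => //.
- exact: (D_smooth _ _ _ _ _ _ VWW DQ oVW (fun k => Ck_subset VWV (F_smooth k))).
- by move=> y; rewrite -PQ /restrict_par /=; congr P; exact: eq_exist.
Qed.

Lemma dsmooth_quot_proj : dsmooth D (quot_plots q D) q.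
Proof.
move=> n U P DP; have [D_open _] := diffD; have oU := D_open _ _ _ DP.
apply: quot_plot_from_lifts => // u Uu.
by exists U, (fun _ h => h), P; split => // -[].
Qed.

Lemma dsmooth_from_quot {Z : Type} {DZ : plots Z} {f : Y -> Z} :
  is_diffeology DZ -> dsmooth D DZ (f \o q) -> dsmooth (quot_plots q D) DZ f.
Proof.
move=> [_ [_ [DZ_loc _]]] fqS n U P P_quot.
apply: DZ_loc => [|u Uu]; first by case: P_quot.
have [V [VU [Q [oV Vu DQ PQ]]]] := quot_plot_lift P_quot Uu.
exists V, VU; split => //.
have -> : restrict_par VU (f \o P) = (f \o q) \o Q by apply: funext => v /=; rewrite -PQ.
exact: fqS.
Qed.

End QuotientDiffeology.

Section GroupoidLaws.
Context {G M : Type} {src tgt : G -> M} {unit : M -> G} {inv : G -> G}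
  {mul : G -> G -> G}.
Hypothesis gpdG : groupoid_axioms src tgt unit inv mul.

Lemma src_unit x : src (unit x) = x.
Proof. by case: gpdG => /(_ x) []. Qed.

Lemma tgt_unit x : tgt (unit x) = x.
Proof. by case: gpdG => /(_ x) []. Qed.

Lemma src_inv g : src (inv g) = tgt g.
Proof. by case: gpdG => _ [/(_ g) []]. Qed.

Lemma tgt_inv g : tgt (inv g) = src g.
Proof. by case: gpdG => _ [/(_ g) []]. Qed.

Lemma src_mul g h : src g = tgt h -> src (mul g h) = src h.
Proof. by case: gpdG => _ [_ [/(_ g h) gh _]] /gh []. Qed.

Lemma tgt_mul g h : src g = tgt h -> tgt (mul g h) = tgt g.
Proof. by case: gpdG => _ [_ [/(_ g h) gh _]] /gh []. Qed.

Lemma mulgA g h k : src g = tgt h -> src h = tgt k ->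
  mul g (mul h k) = mul (mul g h) k.
Proof. by case: gpdG => _ [_ [_ [A _]]] gh hk; rewrite A. Qed.

Lemma mul1g x g : tgt g = x -> mul (unit x) g = g.
Proof. by case: gpdG => _ [_ [_ [_ [/(_ g) [] + _ _]]]] <-. Qed.

Lemma mulg1 x g : src g = x -> mul g (unit x) = g.
Proof. by case: gpdG => _ [_ [_ [_ [/(_ g) [] _ + _]]]] <-. Qed.

Lemma mulgV g : mul g (inv g) = unit (tgt g).
Proof. by case: gpdG => _ [_ [_ [_ [_ /(_ g) []]]]]. Qed.

Lemma mulVg g : mul (inv g) g = unit (src g).
Proof. by case: gpdG => _ [_ [_ [_ [_ /(_ g) []]]]]. Qed.

End GroupoidLaws.

Ltac gpd_ends gpdG := lazymatch type of gpdG with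
  | groupoid_axioms ?src ?tgt ?unit ?inv ?mul =>
    repeat match goal with
    | |- context [src (unit ?x)] => rewrite (src_unit gpdG x)
    | |- context [tgt (unit ?x)] => rewrite (tgt_unit gpdG x)
    | |- context [src (inv ?g)] => rewrite (src_inv gpdG g)
    | |- context [tgt (inv ?g)] => rewrite (tgt_inv gpdG g)
    | |- context [src (mul ?g ?h)] =>
        let gh := fresh in assert (gh : src g = tgt h) by gpd_ends gpdG;
        rewrite (src_mul gpdG g h gh); clear gh
    | |- context [tgt (mul ?g ?h)] =>
        let gh := fresh in assert (gh : src g = tgt h) by gpd_ends gpdG;
        rewrite (tgt_mul gpdG g h gh); clear gh
    end; try congruence
  end.

Section GroupoidAlgebra.
Context {G M : Type} {src tgt : G -> M} {unit : M -> G} {inv : G -> G}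
  {mul : G -> G -> G}.
Hypothesis gpdG : groupoid_axioms src tgt unit inv mul.

Lemma inv_uniq g h : src g = tgt h -> mul g h = unit (tgt g) -> h = inv g.
Proof.
move=> gh gh1.
have : mul (inv g) (mul g h) = mul (inv g) (unit (tgt g)) by rewrite gh1.
rewrite (mulgA gpdG) ?(mulVg gpdG) ?(mul1g gpdG) ?(mulg1 gpdG); by gpd_ends gpdG.
Qed.

Lemma invgK g : inv (inv g) = g.
Proof.
symmetry; apply: inv_uniq; first by gpd_ends gpdG.
by rewrite (mulVg gpdG) (tgt_inv gpdG).
Qed.

Lemma invMg g h : src g = tgt h -> inv (mul g h) = mul (inv h) (inv g).
Proof.
move=> gh; symmetry; apply: inv_uniq; first by gpd_ends gpdG.
rewrite -(mulgA gpdG g h); try by gpd_ends gpdG.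
rewrite (mulgA gpdG h (inv h)); try by gpd_ends gpdG.
by rewrite (mulgV gpdG) (mul1g gpdG) ?(mulgV gpdG); gpd_ends gpdG.
Qed.

Lemma inv_unit x : inv (unit x) = unit x.
Proof.
symmetry; apply: inv_uniq; first by gpd_ends gpdG.
by rewrite (mul1g gpdG); gpd_ends gpdG.
Qed.

Lemma idem_unit e : src e = tgt e -> mul e e = e -> e = unit (src e).
Proof.
move=> se ee.
have : mul (inv e) (mul e e) = mul (inv e) e by rewrite ee.
by rewrite (mulgA gpdG) ?(mulVg gpdG) ?(mul1g gpdG); gpd_ends gpdG.
Qed.

Lemma abelian_commutator x a b : abelian_gpd src tgt mul ->
  isotropic src tgt x a -> isotropic src tgt x b ->
  mul (mul a b) (mul (inv a) (inv b)) = unit x.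
Proof.
move=> abG xa xb; have [sa ta] := xa; have [sb tb] := xb.
rewrite (abG x a b xa xb) -(mulgA gpdG b a); try by gpd_ends gpdG.
rewrite (mulgA gpdG a (inv a)); try by gpd_ends gpdG.
by rewrite (mulgV gpdG) (mul1g gpdG) ?(mulgV gpdG); gpd_ends gpdG.
Qed.

Definition gconj g n := mul (mul g n) (inv g).

Local Notation CS := (commutator_sub src tgt unit inv mul).

Lemma commutator_sub_isotropic {x n} : CS x n -> isotropic src tgt x n.
Proof.
by elim=> [|a b [sa ta] [sb tb]|g h _ [sg tg] _ [sh th]|g _ [sg tg]];
  split; gpd_ends gpdG.
Qed.

Lemma gconj_unit g : gconj g (unit (src g)) = unit (tgt g).
Proof. by rewrite /gconj (mulg1 gpdG) ?(mulgV gpdG). Qed.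

Lemma gconjM g n m : isotropic src tgt (src g) n -> isotropic src tgt (src g) m ->
  gconj g (mul n m) = mul (gconj g n) (gconj g m).
Proof.
move=> [sn tn] [sm tm]; rewrite /gconj.
rewrite -(mulgA gpdG (mul g n) (inv g)); try by gpd_ends gpdG.
rewrite (mulgA gpdG (inv g) (mul g m)); try by gpd_ends gpdG.
rewrite (mulgA gpdG (inv g) g m); try by gpd_ends gpdG.
rewrite (mulVg gpdG) (mul1g gpdG _ m); try by gpd_ends gpdG.
rewrite (mulgA gpdG (mul g n) m); try by gpd_ends gpdG.
by rewrite -(mulgA gpdG g n m); gpd_ends gpdG.
Qed.

Lemma gconjV g n : isotropic src tgt (src g) n ->
  gconj g (inv n) = inv (gconj g n).
Proof.
move=> [sn tn]; rewrite /gconj.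
rewrite (invMg (mul g n) (inv g)); try by gpd_ends gpdG.
rewrite invgK (invMg g n); try by gpd_ends gpdG.
by rewrite (mulgA gpdG g (inv n) (inv g)); gpd_ends gpdG.
Qed.

Lemma commutator_sub_gconj x n g : CS x n -> src g = x -> CS (tgt g) (gconj g n).
Proof.
move=> Sn; elim: Sn g => [|a b [sa ta] [sb tb]|n1 n2 S1 IH1 S2 IH2|n1 S1 IH1] g gx;
  subst x.
- by rewrite gconj_unit; constructor.
- rewrite !gconjM ?gconjV; try by split; gpd_ends gpdG.
  by apply: cs_comm; split; rewrite /gconj; gpd_ends gpdG.
- rewrite gconjM; try exact: commutator_sub_isotropic.
  by constructor; [exact: IH1 | exact: IH2].
- by rewrite gconjV; [constructor; exact: IH1 | exact: commutator_sub_isotropic].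
Qed.

Local Notation AR := (ab_rel src tgt unit inv mul).

Lemma comm_subgpd_isotropic {n} :
  comm_subgpd src tgt unit inv mul n -> CS (src n) n /\ src n = tgt n.
Proof.
by move=> [x Sn]; have [-> ->] := commutator_sub_isotropic Sn.
Qed.

Lemma ab_rel_refl g : AR g g.
Proof.
exists (unit (tgt g)); split; first by exists (tgt g); constructor.
by split; [gpd_ends gpdG | rewrite (mul1g gpdG)].
Qed.

Lemma ab_rel_src {g h} : AR g h -> src h = src g.
Proof. by move=> [n [_ [sn ->]]]; gpd_ends gpdG. Qed.

Lemma ab_rel_tgt {g h} : AR g h -> tgt h = tgt g.
Proof.
by move=> [n [Sn [sn ->]]]; have [_ e] := comm_subgpd_isotropic Sn; gpd_ends gpdG.
Qed.

Lemma ab_rel_sym {g h} : AR g h -> AR h g.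
Proof.
move=> [n [Sn [sn ->]]]; have [S e] := comm_subgpd_isotropic Sn.
exists (inv n); split; first by exists (src n); constructor.
split; first by gpd_ends gpdG.
rewrite (mulgA gpdG); try by gpd_ends gpdG.
by rewrite (mulVg gpdG) (mul1g gpdG).
Qed.

Lemma ab_rel_trans {g h k} : AR g h -> AR h k -> AR g k.
Proof.
move=> [n [Sn [sn ->]]] [m [Sm [sm ->]]].
have [Sn' en] := comm_subgpd_isotropic Sn; have [Sm' em] := comm_subgpd_isotropic Sm.
have smn : src m = src n by move: sm; gpd_ends gpdG.
exists (mul m n); split; first by exists (src n); apply: cs_mul => //; rewrite -smn.
split; first by gpd_ends gpdG.
by rewrite (mulgA gpdG); gpd_ends gpdG.
Qed.

Lemma ab_relMr {g g' h} : AR g g' -> src g = tgt h -> AR (mul g h) (mul g' h).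
Proof.
move=> [n [Sn [sn ->]]] gh; have [_ e] := comm_subgpd_isotropic Sn.
exists n; split => //; split; first by gpd_ends gpdG.
by rewrite (mulgA gpdG); gpd_ends gpdG.
Qed.

Lemma ab_relMl {g h h'} : AR h h' -> src g = tgt h -> AR (mul g h) (mul g h').
Proof.
move=> [m [Sm [sm ->]]] gh; have [S e] := comm_subgpd_isotropic Sm.
exists (gconj g m); split.
  by exists (tgt g); apply: commutator_sub_gconj S _; gpd_ends gpdG.
split; first by rewrite /gconj; gpd_ends gpdG.
rewrite /gconj -(mulgA gpdG (mul g m) (inv g)); try by gpd_ends gpdG.
rewrite (mulgA gpdG (inv g) g h); try by gpd_ends gpdG.
by rewrite (mulVg gpdG) (mul1g gpdG) ?(mulgA gpdG g m h); gpd_ends gpdG.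
Qed.

Lemma ab_relV {g h} : AR g h -> AR (inv g) (inv h).
Proof.
move=> [n [Sn [sn ->]]]; have [S e] := comm_subgpd_isotropic Sn.
exists (gconj (inv g) (inv n)); split.
  exists (tgt (inv g)); apply: (commutator_sub_gconj (src n)).
    exact: cs_inv.
  by gpd_ends gpdG.
split; first by rewrite /gconj; gpd_ends gpdG.
rewrite /gconj invgK (invMg n g); try by gpd_ends gpdG.
rewrite -(mulgA gpdG (mul (inv g) (inv n)) g (inv g)); try by gpd_ends gpdG.
by rewrite (mulgV gpdG) (mulg1 gpdG); gpd_ends gpdG.
Qed.

Lemma ab_rel_comm {x g h} : isotropic src tgt x g -> isotropic src tgt x h ->
  AR (mul h g) (mul g h).
Proof.
move=> [sg tg] [sh th].
exists (mul (mul g h) (mul (inv g) (inv h))); split; first by exists x; constructor.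
split; first by gpd_ends gpdG.
rewrite -(mulgA gpdG (mul g h) (mul (inv g) (inv h))); try by gpd_ends gpdG.
rewrite -(mulgA gpdG (inv g) (inv h)); try by gpd_ends gpdG.
rewrite (mulgA gpdG (inv h) h g); try by gpd_ends gpdG.
rewrite (mulVg gpdG) (mul1g gpdG); try by gpd_ends gpdG.
by rewrite (mulVg gpdG) (mulg1 gpdG); gpd_ends gpdG.
Qed.

End GroupoidAlgebra.

Section FunctorToAbelianGroupoid.
Context {G M : Type} {src tgt : G -> M} {unit : M -> G} {inv : G -> G}
  {mul : G -> G -> G}.
Hypothesis gpdG : groupoid_axioms src tgt unit inv mul.
Context {H N : Type} {srcH tgtH : H -> N} {unitH : N -> H} {invH : H -> H}
  {mulH : H -> H -> H}.
Hypotheses (gpdH : groupoid_axioms srcH tgtH unitH invH mulH)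
  (abH : abelian_gpd srcH tgtH mulH).
Context {U : set M} {psi : res_arr src tgt U -> H} {psi0 : {x | U x} -> N}.
Hypotheses (psi_src : forall g, srcH (psi g) = psi0 (res_src src tgt U g))
  (psi_tgt : forall g, tgtH (psi g) = psi0 (res_tgt src tgt U g))
  (psi_comp : forall g h k, res_comp src tgt mul U g h k ->
     comp_graph srcH tgtH mulH (psi g) (psi h) (psi k)).

Lemma psiM {g h} (gh : src g = tgt h) pg ph pgh :
  psi (exist _ (mul g h) pgh) = mulH (psi (exist _ g pg)) (psi (exist _ h ph)) /\
  srcH (psi (exist _ g pg)) = tgtH (psi (exist _ h ph)).
Proof.
by have [? ?] := psi_comp (exist _ g pg) (exist _ h ph) (exist _ _ pgh) (conj gh erefl).
Qed.

Lemma psi_src_at {g} pg {x} (Ux : U x) : src g = x ->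
  srcH (psi (exist _ g pg)) = psi0 (exist _ x Ux).
Proof. by move=> gx; rewrite psi_src; congr psi0; exact: eq_exist. Qed.

Lemma psi_tgt_at {g} pg {x} (Ux : U x) : tgt g = x ->
  tgtH (psi (exist _ g pg)) = psi0 (exist _ x Ux).
Proof. by move=> gx; rewrite psi_tgt; congr psi0; exact: eq_exist. Qed.

Lemma isotropic_res {x g} : U x -> isotropic src tgt x g -> U (src g) /\ U (tgt g).
Proof. by move=> Ux [-> ->]. Qed.

Lemma psi_unit {x} (Ux : U x) pu : psi (exist _ (unit x) pu) = unitH (psi0 (exist _ x Ux)).
Proof.
have uu : mul (unit x) (unit x) = unit x by apply: (mul1g gpdG); gpd_ends gpdG.
have puu : U (src (mul (unit x) (unit x))) /\ U (tgt (mul (unit x) (unit x))).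
  by rewrite uu.
have su : src (unit x) = tgt (unit x) by gpd_ends gpdG.
have [psi_uu sut] := psiM su pu pu puu.
have idem : mulH (psi (exist _ _ pu)) (psi (exist _ _ pu)) = psi (exist _ _ pu).
  by rewrite -psi_uu; congr psi; exact: eq_exist.
by rewrite (idem_unit gpdH _ sut idem) (psi_src_at _ Ux) //; gpd_ends gpdG.
Qed.

Lemma psi_inv {x} (Ux : U x) {a} pa pia : isotropic src tgt x a ->
  psi (exist _ (inv a) pia) = invH (psi (exist _ a pa)).
Proof.
move=> [sa ta].
have aia : mul a (inv a) = unit x by rewrite (mulgV gpdG) ta.
have paia : U (src (mul a (inv a))) /\ U (tgt (mul a (inv a))).
  by rewrite aia; gpd_ends gpdG.
have ai : src a = tgt (inv a) by gpd_ends gpdG.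
have [psi_aia sai] := psiM ai pa pia paia.
have pu : U (src (unit x)) /\ U (tgt (unit x)) by gpd_ends gpdG.
apply: (inv_uniq gpdH _ _ sai); rewrite (psi_tgt_at _ Ux) // -(psi_unit Ux pu) -psi_aia.
by congr psi; exact: eq_exist.
Qed.

Lemma psi_commutator_sub {x} (Ux : U x) {n} : commutator_sub src tgt unit inv mul x n ->
  forall pn, psi (exist _ n pn) = unitH (psi0 (exist _ x Ux)).
Proof.
elim=> [|a b xa xb|n1 n2 S1 IH1 S2 IH2|n1 S1 IH1] pn.
- exact: psi_unit.
- have xia : isotropic src tgt x (inv a) by case: xa => sa ta; split; gpd_ends gpdG.
  have xib : isotropic src tgt x (inv b) by case: xb => sb tb; split; gpd_ends gpdG.
  have xab : isotropic src tgt x (mul a b).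
    by case: xa xb => sa ta [sb tb]; split; gpd_ends gpdG.
  have xiab : isotropic src tgt x (mul (inv a) (inv b)).
    by case: xa xb => sa ta [sb tb]; split; gpd_ends gpdG.
  have pa := isotropic_res Ux xa; have pb := isotropic_res Ux xb.
  have pia := isotropic_res Ux xia; have pib := isotropic_res Ux xib.
  have pab := isotropic_res Ux xab; have piab := isotropic_res Ux xiab.
  have [-> _] := psiM (etrans xab.1 (esym xiab.2)) pab piab pn.
  have [-> _] := psiM (etrans xa.1 (esym xb.2)) pa pb pab.
  have [-> _] := psiM (etrans xia.1 (esym xib.2)) pia pib piab.
  rewrite (psi_inv Ux pa pia xa) (psi_inv Ux pb pib xb).
  case: xa xb => sa ta [sb tb].
  by apply: (abelian_commutator gpdH) => //; split;
    [apply: psi_src_at | apply: psi_tgt_at | apply: psi_src_at | apply: psi_tgt_at].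
- have xn1 := commutator_sub_isotropic gpdG S1.
  have xn2 := commutator_sub_isotropic gpdG S2.
  have p1 := isotropic_res Ux xn1; have p2 := isotropic_res Ux xn2.
  have [-> _] := psiM (etrans xn1.1 (esym xn2.2)) p1 p2 pn.
  by rewrite (IH1 p1) (IH2 p2) (mul1g gpdH) //; gpd_ends gpdH.
- have xn1 := commutator_sub_isotropic gpdG S1; have p1 := isotropic_res Ux xn1.
  by rewrite (psi_inv Ux p1 pn xn1) (IH1 p1) (inv_unit gpdH).
Qed.

Lemma psi_ab_rel g h pg ph : ab_rel src tgt unit inv mul g h ->
  psi (exist _ h ph) = psi (exist _ g pg).
Proof.
move=> [n [Sn [sn hn]]]; subst h; have [S e] := comm_subgpd_isotropic gpdG Sn.
have Ux : U (src n) by rewrite sn; case: pg.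
have pn := isotropic_res Ux (conj erefl (esym e)).
have [-> _] := psiM sn pn pg ph.
by rewrite (psi_commutator_sub Ux S pn) (mul1g gpdH) //; apply: psi_tgt_at; congruence.
Qed.

End FunctorToAbelianGroupoid.

Section AbelianizationGroupoid.
Context {G M : Type} {src tgt : G -> M} {unit : M -> G} {inv : G -> G}
  {mul : G -> G -> G}.

Local Notation p := (ab_proj src tgt unit inv mul).
Local Notation AR := (ab_rel src tgt unit inv mul).

Definition ab_repr (a : ab_quot src tgt unit inv mul) : G :=
  proj1_sig (cid (proj2_sig a)).

Lemma ab_reprK : cancel ab_repr p.
Proof. by move=> [A ?]; rewrite /ab_repr; case: cid => g /= Ag; exact: eq_exist. Qed.

Lemma ab_proj_surj a : exists g, p g = a.
Proof. by exists (ab_repr a); exact: ab_reprK. Qed.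

Lemma ab_quot_ind (P : ab_quot src tgt unit inv mul -> Prop) :
  (forall g, P (p g)) -> forall a, P a.
Proof. by move=> Pp a; rewrite -[a]ab_reprK. Qed.

Definition ab_src a := src (ab_repr a).
Definition ab_tgt a := tgt (ab_repr a).
Definition ab_unit x := p (unit x).
Definition ab_inv a := p (inv (ab_repr a)).
Definition ab_mul a b := p (mul (ab_repr a) (ab_repr b)).

Hypothesis gpdG : groupoid_axioms src tgt unit inv mul.

Lemma ab_proj_eq g h : AR g h -> p g = p h.
Proof.
move=> gh; apply: eq_exist; apply: funext => k; apply: propext.
by split=> [gk|hk];
  [exact: (ab_rel_trans gpdG (ab_rel_sym gpdG gh) gk) | exact: (ab_rel_trans gpdG gh hk)].
Qed.

Lemma ab_proj_rel g h : p g = p h -> AR g h.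
Proof. by move=> /(congr1 sval) /= ->; exact: ab_rel_refl. Qed.

Lemma ab_repr_rel g : AR g (ab_repr (p g)).
Proof. by apply: ab_proj_rel; rewrite ab_reprK. Qed.

Lemma ab_srcE g : ab_src (p g) = src g.
Proof. exact: (ab_rel_src gpdG (ab_repr_rel g)). Qed.

Lemma ab_tgtE g : ab_tgt (p g) = tgt g.
Proof. exact: (ab_rel_tgt gpdG (ab_repr_rel g)). Qed.

Lemma ab_invE g : ab_inv (p g) = p (inv g).
Proof. by apply/ab_proj_eq/(ab_relV gpdG)/(ab_rel_sym gpdG); exact: ab_repr_rel. Qed.

Lemma ab_mulE g h : src g = tgt h -> ab_mul (p g) (p h) = p (mul g h).
Proof.
move=> gh; apply/ab_proj_eq/(ab_rel_sym gpdG).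
apply: (ab_rel_trans gpdG (ab_relMr gpdG (ab_repr_rel g) gh)).
by apply: (ab_relMl gpdG (ab_repr_rel h)); rewrite (ab_rel_src gpdG (ab_repr_rel g)).
Qed.

Lemma ab_groupoid_axioms : groupoid_axioms ab_src ab_tgt ab_unit ab_inv ab_mul.
Proof.
split; first by move=> x; rewrite /ab_unit ab_srcE ab_tgtE (src_unit gpdG) (tgt_unit gpdG).
split.
  by elim/ab_quot_ind => g; rewrite ab_invE !ab_srcE !ab_tgtE (src_inv gpdG) (tgt_inv gpdG).
split.
  elim/ab_quot_ind => g; elim/ab_quot_ind => h; rewrite ab_srcE ab_tgtE => gh.
  by rewrite ab_mulE // !ab_srcE !ab_tgtE (src_mul gpdG _ _ gh) (tgt_mul gpdG _ _ gh).
split.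
  elim/ab_quot_ind => g; elim/ab_quot_ind => h; elim/ab_quot_ind => k.
  rewrite !ab_srcE !ab_tgtE => gh hk.
  rewrite (ab_mulE _ _ gh) (ab_mulE _ _ hk) ab_mulE ?(src_mul gpdG _ _ gh) //.
  by rewrite ab_mulE ?(tgt_mul gpdG _ _ hk) // (mulgA gpdG).
split.
  elim/ab_quot_ind => g; rewrite /ab_unit ab_srcE ab_tgtE !ab_mulE; try by gpd_ends gpdG.
  by rewrite (mul1g gpdG) // (mulg1 gpdG).
elim/ab_quot_ind => g; rewrite /ab_unit ab_invE ab_srcE ab_tgtE !ab_mulE;
  try by gpd_ends gpdG.
by rewrite (mulgV gpdG) (mulVg gpdG).
Qed.

Lemma ab_abelian : abelian_gpd ab_src ab_tgt ab_mul.
Proof.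
move=> x; elim/ab_quot_ind => g; elim/ab_quot_ind => h.
rewrite /isotropic !ab_srcE !ab_tgtE => xg xh.
rewrite !ab_mulE; try by case: xg xh => ? ? [? ?]; congruence.
exact/ab_proj_eq/(ab_rel_comm gpdG xh xg).
Qed.

End AbelianizationGroupoid.

Section AbelianizationDiffeology.
Context {G M : Type} {DG : plots G} {DM : plots M} {src tgt : G -> M}
  {unit : M -> G} {inv : G -> G} {mul : G -> G -> G}.
Hypothesis dgpdG : is_dgroupoid DG DM src tgt unit inv mul.

Let gpdG : groupoid_axioms src tgt unit inv mul.
Proof. by case: dgpdG => [[]]. Qed.

Let diffG : is_diffeology DG.
Proof. by case: dgpdG => [[]]. Qed.

Local Notation p := (ab_proj src tgt unit inv mul).
Local Notation DQ := (quot_plots p DG).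
Local Notation srcQ := (@ab_src G M src tgt unit inv mul).
Local Notation tgtQ := (@ab_tgt G M src tgt unit inv mul).
Local Notation mulQ := (@ab_mul G M src tgt unit inv mul).

Lemma ab_diffeology : is_diffeology DQ.
Proof. exact: (quot_diffeology diffG ab_proj_surj). Qed.

Lemma dsmooth_ab_mul :
  dsmooth (sub_plots (composable ab_src ab_tgt) (prod_plots DQ DQ)) DQ
    (fun ab => ab_mul (proj1_sig ab).1 (proj1_sig ab).2).
Proof.
move=> n U P [P1_quot P2_quot].
apply: quot_plot_from_lifts => [|u Uu]; first by case: P1_quot.
have [V [VU [Q1 [Q2 [oV Vu DQ1 DQ2 PQ]]]]] :=
  quot_plot_lift2 diffG ab_proj_surj P1_quot P2_quot Uu.
have Q12 v : src (Q1 v) = tgt (Q2 v).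
  have [PQ1 PQ2] := PQ v.
  by rewrite -(ab_srcE gpdG) -(ab_tgtE gpdG) -PQ1 -PQ2; exact: (proj2_sig (P _)).
have [_ [_ _ _ _ mulS]] := dgpdG.
exists V, VU, (fun v => mul (Q1 v) (Q2 v)); split => //.
  by apply: (mulS n V (fun v => exist _ (Q1 v, Q2 v) (Q12 v))); split.
by move=> v; have [PQ1 PQ2] := PQ v; rewrite -(ab_mulE gpdG _ _ (Q12 v)) -PQ1 -PQ2.
Qed.

Lemma ab_dgroupoid : is_dgroupoid DQ DM ab_src ab_tgt ab_unit ab_inv ab_mul.
Proof.
have [[_ diffM _] [srcS tgtS unitS invS _]] := dgpdG.
split; first by split; [exact: ab_diffeology | exact: diffM | exact: ab_groupoid_axioms].
split.
- apply: (dsmooth_from_quot diffG ab_proj_surj diffM).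
  by have -> : ab_src \o p = src by apply: funext => g; exact: (ab_srcE gpdG).
- apply: (dsmooth_from_quot diffG ab_proj_surj diffM).
  by have -> : ab_tgt \o p = tgt by apply: funext => g; exact: (ab_tgtE gpdG).
- exact: (dsmooth_comp unitS (dsmooth_quot_proj diffG)).
- apply: (dsmooth_from_quot diffG ab_proj_surj ab_diffeology).
  have -> : ab_inv \o p = p \o inv by apply: funext => g; exact: (ab_invE gpdG).
  exact: (dsmooth_comp invS (dsmooth_quot_proj diffG)).
- exact: dsmooth_ab_mul.
Qed.

Lemma ab_proj_morphism :
  is_gpd_morphism DG DM DQ DM src tgt (comp_graph src tgt mul)
    ab_src ab_tgt (comp_graph ab_src ab_tgt ab_mul) p id.
Proof.
split; [exact: (dsmooth_quot_proj diffG) | by move=> n U P | exact: (ab_srcE gpdG) |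
  exact: (ab_tgtE gpdG) |].
by move=> g h _ [gh ->]; rewrite /comp_graph (ab_srcE gpdG) (ab_tgtE gpdG) (ab_mulE gpdG).
Qed.

Section UniversalProperty.
Context {U : set M} {H N : Type} {DH : plots H} {DN : plots N}
  {srcH tgtH : H -> N} {unitH : N -> H} {invH : H -> H} {mulH : H -> H -> H}.
Variables (psi : res_arr src tgt U -> H) (psi0 : {x | U x} -> N).

Definition ab_desc (a : res_arr srcQ tgtQ U) : H :=
  psi (exist _ (ab_repr (proj1_sig a)) (proj2_sig a)).

Lemma ab_desc_unique (chi : res_arr srcQ tgtQ U -> H) :
  (forall g a, proj1_sig a = p (proj1_sig g) -> chi a = psi g) -> chi = ab_desc.
Proof. by move=> chi_psi; apply: funext => a; apply: chi_psi; rewrite /= ab_reprK. Qed.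

Hypotheses (dgpdH : is_dgroupoid DH DN srcH tgtH unitH invH mulH)
  (abH : abelian_gpd srcH tgtH mulH)
  (psi_morph : is_gpd_morphism (res_arr_plots DG src tgt U) (res_obj_plots DM U)
     DH DN (res_src src tgt U) (res_tgt src tgt U) (res_comp src tgt mul U)
     srcH tgtH (comp_graph srcH tgtH mulH) psi psi0).

Lemma ab_desc_spec g a : proj1_sig a = p (proj1_sig g) -> ab_desc a = psi g.
Proof.
have [[_ _ gpdH] _] := dgpdH; have [_ _ psi_src psi_tgt psi_comp] := psi_morph.
case: g => g pg /= ag; rewrite /ab_desc.
apply: (psi_ab_rel gpdG gpdH abH psi_src psi_tgt psi_comp).
by rewrite ag; exact: ab_repr_rel.
Qed.

Lemma ab_desc_morphism :
  is_gpd_morphism (res_arr_plots DQ srcQ tgtQ U) (res_obj_plots DM U) DH DN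
    (res_src srcQ tgtQ U) (res_tgt srcQ tgtQ U) (res_comp srcQ tgtQ mulQ U)
    srcH tgtH (comp_graph srcH tgtH mulH) ab_desc psi0.
Proof.
have [psiS psi0S psi_src psi_tgt psi_comp] := psi_morph.
split => //; [|by move=> a; exact: psi_src | by move=> a; exact: psi_tgt |].
- move=> n V P P_quot; have [[[_ [_ [H_loc _]]] _ _] _] := dgpdH.
  apply: H_loc => [|v Vv]; first by case: P_quot.
  have [W [WV [Q [oW Wv DQ PQ]]]] := quot_plot_lift diffG ab_proj_surj P_quot Vv.
  have QU w : U (src (Q w)) /\ U (tgt (Q w)).
    by rewrite -(ab_srcE gpdG) -(ab_tgtE gpdG) -PQ; exact: (proj2_sig (P _)).
  exists W, WV; split => //.
  have -> : restrict_par WV (ab_desc \o P) = psi \o (fun w => exist _ (Q w) (QU w)).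
    by apply: funext => w; apply: ab_desc_spec; exact: PQ.
  by apply: psiS.
- move=> a b c [ab ac].
  pose ra := ab_repr (proj1_sig a); pose rb := ab_repr (proj1_sig b).
  have pc : U (src (mul ra rb)) /\ U (tgt (mul ra rb)).
    rewrite (src_mul gpdG _ _ ab) (tgt_mul gpdG _ _ ab).
    by split; [case: (proj2_sig b) | case: (proj2_sig a)].
  have := psi_comp (exist _ ra (proj2_sig a)) (exist _ rb (proj2_sig b))
    (exist _ _ pc) (conj ab erefl).
  by rewrite (ab_desc_spec (exist _ _ pc) c ac).
Qed.

End UniversalProperty.
End AbelianizationDiffeology.

Theorem mainTheorem14 (G M : Type) (DG : plots G) (DM : plots M)
    (src tgt : G -> M) (unit : M -> G) (inv : G -> G) (mul : G -> G -> G) :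
  is_dgroupoid DG DM src tgt unit inv mul ->
  exists (srcQ tgtQ : ab_quot src tgt unit inv mul -> M)
         (unitQ : M -> ab_quot src tgt unit inv mul)
         (invQ : ab_quot src tgt unit inv mul -> ab_quot src tgt unit inv mul)
         (mulQ : ab_quot src tgt unit inv mul -> ab_quot src tgt unit inv mul ->
                 ab_quot src tgt unit inv mul),
    (* the groupoid structure on G/(G,G) is the one induced by the quotient map *)
    [/\ forall g, srcQ (ab_proj src tgt unit inv mul g) = src g,
        forall g, tgtQ (ab_proj src tgt unit inv mul g) = tgt g,
        forall x, unitQ x = ab_proj src tgt unit inv mul (unit x),
        forall g, invQ (ab_proj src tgt unit inv mul g)
                  = ab_proj src tgt unit inv mul (inv g) &
        forall g h, src g = tgt h ->
          mulQ (ab_proj src tgt unit inv mul g) (ab_proj src tgt unit inv mul h)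
          = ab_proj src tgt unit inv mul (mul g h)] /\
    (* with the quotient diffeology it is a diffeological groupoid and,
       with the quotient map, the abelianization of G *)
    is_abelianization DG DM src tgt unit inv mul
      (quot_plots (ab_proj src tgt unit inv mul) DG)
      srcQ tgtQ unitQ invQ mulQ (ab_proj src tgt unit inv mul).
Proof.
move=> dgpdG; have [[_ _ gpdG] _] := dgpdG.
exists ab_src, ab_tgt, ab_unit, ab_inv, ab_mul; split.
  by split=> //; [exact: (ab_srcE gpdG) | exact: (ab_tgtE gpdG) | exact: (ab_invE gpdG) |
    exact: (ab_mulE gpdG)].
split; [exact: ab_dgroupoid | exact: ab_abelian | exact: ab_proj_surj |
  exact: ab_proj_morphism |].
move=> U _ H N DH DN srcH tgtH unitH invH mulH dgpdH abH psi psi0 psi_morph.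
exists (ab_desc psi); split.
- exact: (ab_desc_morphism dgpdG psi psi0 dgpdH abH psi_morph).
- exact: (ab_desc_spec dgpdG psi psi0 dgpdH abH psi_morph).
- by move=> chi chi0 _; exact: ab_desc_unique.
Qed.
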